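(* Let $\lambda_{\max}>1$, $\tau\in\mathbb{Z}_+$, $k_1\in(0,\lambda_{\max}-1]$ and $k_2\in(0,1]$, and consider the two-arrival policy $\lambda(q)=1+k_1$ for $0\le q<\tau$ and $\lambda(q)=1-k_2$ for $q\ge\tau$. Let $\pi$ be the stationary distribution of the associated queue-length chain and $\bar q\sim\pi$. Then $$\mathbb{E}[\bar q]\ge\frac{1}{\tau+\frac1{k_2}}\left(\frac{\tau(\tau-1)}{2}+\frac{\tau}{k_2}+\frac{1-k_2}{k_2^2}\right).$$
   Context: For a policy $\lambda:\mathbb{Z}_+\to[0,\lambda_{\max}]$, the queue-length chain is the continuous-time birth–death chain on $\mathbb{Z}_+$ with rate $\lambda(q)$ from $q$ to $q+1$ and rate $1$ from $q$ to $q-1$ ($q\ge1$), restricted to the states reachable from $0$. *)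

From Stdlib Require Import Reals Lra Lia.
From Coquelicot Require Import Coquelicot.
Open Scope R_scope.

(* States of the birth-death chain reachable from 0, for the arrival-rate
   policy lam : nat -> R (birth rate lam q from q to q+1, death rate 1
   from q+1 to q). *)
Inductive reachable (lam : nat -> R) : nat -> Prop :=
  | reach0 : reachable lam 0
  | reach_up : forall q, reachable lam q -> 0 < lam q -> reachable lam (S q)
  | reach_down : forall q, reachable lam (S q) -> reachable lam q.

Definition out_rate (lam : nat -> R) (q : nat) : R :=
  lam q + (match q with O => 0 | S _ => 1 end).

Definition in_flux (lam : nat -> R) (pi : nat -> R) (q : nat) : R :=
  (match q with O => 0 | S p => pi p * lam p end) + pi (S q) * 1.

Definition stationary_dist (lam : nat -> R) (pi : nat -> R) : Prop :=
  (forall q, 0 <= pi q) /\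
  is_series pi 1 /\
  (forall q, ~ reachable lam q -> pi q = 0) /\
  (forall q, reachable lam q -> pi q * out_rate lam q = in_flux lam pi q).

Definition two_arrival (tau : nat) (k1 k2 : R) (q : nat) : R :=
  if (q <? tau)%nat then 1 + k1 else 1 - k2.

(* E[qbar] for qbar ~ pi, as an extended real (limit of the nondecreasing
   partial sums; may be +infinity). *)
Definition mean_queue (pi : nat -> R) : Rbar :=
  Lim_seq (fun n => sum_n (fun q => INR q * pi q) n).

From Stdlib Require Import Reals Lra Lia Classical.
From Coquelicot Require Import Coquelicot.
Open Scope R_scope.

(* The balance equations force the product form
   [pi q = pi 0 (1 + k1)^(min q tau) (1 - k2)^(q - tau)], i.e. [pi] is the
   weight [w q = (1 - k2)^(q - tau)] (flat up to [tau], geometric after it)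
   reweighted by the nondecreasing factor [(1 + k1)^(min q tau)].  Hence [pi]
   dominates the normalised [w] in the likelihood-ratio order, so its mean is
   at least the mean of [w], which is the stated bound: [sum w = tau + 1/k2]
   and [sum q w q = tau (tau - 1)/2 + tau/k2 + (1 - k2)/k2^2]. *)

(* [is_series_ext] at type [R], so that the pointwise goals are equalities
   in [R] rather than in a [NormedModule] carrier, where [ring] fails. *)
Lemma is_series_ext_R (a b : nat -> R) (l : R) :
  (forall n, a n = b n) -> is_series a l -> is_series b l.
Proof. apply is_series_ext. Qed.

Lemma is_series_ge0 (a : nat -> R) (l : R) :
  (forall n, 0 <= a n) -> is_series a l -> 0 <= l.
Proof.
  intros Ha Hl.
  assert (Hsum : forall n, 0 <= sum_n a n).
  { induction n as [|n IH]; [rewrite sum_O; apply Ha|].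
    rewrite sum_Sn; specialize (Ha (S n)); unfold plus; simpl; lra. }
  exact (is_lim_seq_le (fun _ => 0) (sum_n a) 0 l Hsum (is_lim_seq_const 0) Hl).
Qed.

Lemma ex_series_mul_bounded (f a : nat -> R) (M : R) :
  (forall q, 0 <= a q) -> (forall q, Rabs (f q) <= M) ->
  ex_series a -> ex_series (fun q => f q * a q).
Proof.
  intros Ha Hf [l Hl].
  apply (@ex_series_le R_AbsRing R_CompleteNormedModule) with (fun q => M * a q).
  - intro q; change (norm ?y) with (Rabs y).
    rewrite Rabs_mult, (Rabs_pos_eq (a q)) by apply Ha.
    apply Rmult_le_compat_r; [apply Ha | apply Hf].
  - exists (M * l); exact (is_series_scal_l _ _ _ Hl).
Qed.

Lemma is_series_geom_nonneg (x : R) :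
  0 <= x < 1 -> is_series (fun k => x ^ k) (/ (1 - x)).
Proof. intros Hx; apply is_series_geom; rewrite Rabs_pos_eq; lra. Qed.

(* The Cauchy square of the geometric series is [sum (k+1) x^k]. *)
Lemma is_series_arith_geom (x : R) :
  0 <= x < 1 -> is_series (fun k => INR k * x ^ k) (x / (1 - x) ^ 2).
Proof.
  intros Hx.
  pose proof (is_series_geom_nonneg x Hx) as Hg.
  assert (Hsq : is_series (fun k => INR (S k) * x ^ k) (/ (1 - x) * / (1 - x))).
  { apply (is_series_ext_R (fun n => sum_f_R0 (fun k => x ^ k * x ^ (n - k)) n)).
    - intro n; rewrite (sum_eq _ (fun _ => x ^ n)).
      + rewrite sum_cte; ring.
      + intros k Hk; rewrite <- pow_add; f_equal; lia.
    - apply is_series_mult_pos; auto; intro; apply pow_le; lra. }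
  replace (x / (1 - x) ^ 2) with (/ (1 - x) * / (1 - x) - / (1 - x)) by (field; lra).
  apply (is_series_ext_R (fun k => INR (S k) * x ^ k - x ^ k)).
  - intro k; rewrite S_INR; ring.
  - exact (is_series_minus _ _ _ _ Hsq Hg).
Qed.

(* Truncated subtraction makes the weight [1] on [0..tau] and geometric
   beyond. *)
Definition plateau_weight (x : R) (tau q : nat) : R := x ^ (q - tau).

Lemma is_series_plateau_weight (x : R) (tau : nat) :
  0 <= x < 1 -> is_series (plateau_weight x tau) (INR tau + / (1 - x)).
Proof.
  intros Hx; induction tau as [|tau IH].
  - rewrite Rplus_0_l.
    apply (is_series_ext_R (fun q => x ^ q)); [|exact (is_series_geom_nonneg x Hx)].
    intro q; unfold plateau_weight; now rewrite Nat.sub_0_r.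
  - apply is_series_decr_1.
    replace (plus _ _) with (INR tau + / (1 - x))
      by (rewrite S_INR; unfold plus, opp, plateau_weight; simpl; ring).
    exact IH.
Qed.

Lemma is_series_plateau_weight_mean (x : R) (tau : nat) :
  0 <= x < 1 ->
  is_series (fun q => INR q * plateau_weight x tau q)
    (INR tau * (INR tau - 1) / 2 + INR tau / (1 - x) + x / (1 - x) ^ 2).
Proof.
  intros Hx; induction tau as [|tau IH].
  - replace (_ + _ + _) with (x / (1 - x) ^ 2) by (simpl; field; lra).
    apply (is_series_ext_R (fun q => INR q * x ^ q)); [|exact (is_series_arith_geom x Hx)].
    intro q; unfold plateau_weight; now rewrite Nat.sub_0_r.
  - apply is_series_decr_1.
    replace (plus _ _) with ((INR tau * (INR tau - 1) / 2 + INR tau / (1 - x) + x / (1 - x) ^ 2)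
                             + (INR tau + / (1 - x)))
      by (rewrite S_INR; unfold plus, opp, plateau_weight; simpl; field; lra).
    apply (is_series_ext_R (fun q => INR q * plateau_weight x tau q + plateau_weight x tau q)).
    + intro q; rewrite S_INR; unfold plateau_weight; simpl; ring.
    + exact (is_series_plus _ _ _ _ IH (is_series_plateau_weight x tau Hx)).
Qed.

(* With [m = Q / W] and [n] its integer part, every term of
   [sum (q - m) (f q - f n) w q] is nonnegative, and the sum equals
   [L - m P] because [sum (q - m) w q = 0]. *)
Lemma mean_le_of_nondecreasing_ratio (w f : nat -> R) (W Q P L : R) :
  (forall q, 0 <= w q) ->
  (forall q r, (q <= r)%nat -> f q <= f r) ->
  is_series w W -> is_series (fun q => INR q * w q) Q ->
  is_series (fun q => f q * w q) P ->
  is_series (fun q => INR q * (f q * w q)) L ->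
  0 < W -> Q * P <= L * W.
Proof.
  intros Hw Hf HW HQ HP HL HW0.
  set (m := Q / W).
  assert (Hm : 0 <= m).
  { apply Rdiv_le_0_compat; [|exact HW0].
    apply (is_series_ge0 _ _ (fun q => Rmult_le_pos _ _ (pos_INR q) (Hw q)) HQ). }
  destruct (nfloor_ex m Hm) as [n Hn].
  set (K := f n).
  assert (Hterm : forall q, 0 <= (INR q - m) * (f q - K) * w q).
  { intro q; apply Rmult_le_pos; [|apply Hw].
    destruct (Nat.le_gt_cases q n) as [Hqn|Hnq].
    - assert (INR q - m <= 0) by (apply le_INR in Hqn; lra).
      assert (f q - K <= 0) by (pose proof (Hf q n Hqn); unfold K; lra).
      nra.
    - assert (0 <= INR q - m) by (apply le_INR in Hnq; rewrite S_INR in Hnq; lra).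
      assert (0 <= f q - K) by (pose proof (Hf n q ltac:(lia)); unfold K; lra).
      nra. }
  assert (Hsum : is_series (fun q => (INR q - m) * (f q - K) * w q)
                           ((L - m * P) - K * (Q - m * W))).
  { apply (is_series_ext_R
             (fun q => (INR q * (f q * w q) - m * (f q * w q))
                       - K * (INR q * w q - m * w q))); [intro q; ring|].
    exact (is_series_minus _ _ _ _
             (is_series_minus _ _ _ _ HL (is_series_scal_l m _ _ HP))
             (is_series_scal_l K _ _
                (is_series_minus _ _ _ _ HQ (is_series_scal_l m _ _ HW)))). }
  pose proof (is_series_ge0 _ _ Hterm Hsum) as Hge.
  replace (Q - m * W) with 0 in Hge by (unfold m; field; lra).
  replace (Q * P) with (m * P * W) by (unfold m; field; lra).
  apply Rmult_le_compat_r; lra.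
Qed.

(* The balance equation at [q] minus the cut equation at [q - 1] gives the
   cut equation at [q]; off the reachable set both sides vanish. *)
Lemma stationary_dist_succ (lam pi : nat -> R) :
  stationary_dist lam pi -> forall q, pi (S q) = lam q * pi q.
Proof.
  intros [_ [_ [Hout Hbal]]]; induction q as [|q IH].
  - pose proof (Hbal 0%nat (reach0 lam)) as H; unfold out_rate, in_flux in H; lra.
  - destruct (classic (reachable lam (S q))) as [Hr|Hr].
    + pose proof (Hbal _ Hr) as H; unfold out_rate, in_flux in H; lra.
    + rewrite (Hout _ Hr), Hout; [ring|].
      intro H; exact (Hr (reach_down lam _ H)).
Qed.

Lemma two_arrival_stationary_form (tau : nat) (k1 k2 : R) (pi : nat -> R) :
  stationary_dist (two_arrival tau k1 k2) pi ->
  forall q, pi q = pi 0%nat * (1 + k1) ^ Nat.min q tau * plateau_weight (1 - k2) tau q.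
Proof.
  intros Hpi q; unfold plateau_weight; induction q as [|q IH].
  - simpl; ring.
  - rewrite (stationary_dist_succ _ _ Hpi), IH; unfold two_arrival.
    destruct (Nat.ltb_spec q tau).
    + replace (Nat.min (S q) tau) with (S (Nat.min q tau)) by lia.
      replace (S q - tau)%nat with 0%nat by lia; replace (q - tau)%nat with 0%nat by lia.
      simpl; ring.
    + replace (Nat.min (S q) tau) with (Nat.min q tau) by lia.
      replace (S q - tau)%nat with (S (q - tau)) by lia.
      simpl; ring.
Qed.

Theorem lemmaC4 (lmax : R) (tau : nat) (k1 k2 : R) (pi : nat -> R) :
  1 < lmax ->
  0 < k1 -> k1 <= lmax - 1 ->
  0 < k2 -> k2 <= 1 ->
  stationary_dist (two_arrival tau k1 k2) pi ->
  Rbar_le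
    (Finite (/ (INR tau + / k2) *
             (INR tau * (INR tau - 1) / 2 + INR tau / k2 + (1 - k2) / (k2 ^ 2))))
    (mean_queue pi).
Proof.
  (* The bound [k1 <= lmax - 1] only keeps the policy within [0, lmax]. *)
  intros _ Hk1 _ Hk2 Hk2' Hpi.
  pose proof (two_arrival_stationary_form _ _ _ _ Hpi) as Hform.
  destruct Hpi as [Hpos [Hsum _]].
  set (w := plateau_weight (1 - k2) tau).
  set (f q := pi 0%nat * (1 + k1) ^ Nat.min q tau).
  assert (Hx : 0 <= 1 - k2 < 1) by lra.
  pose proof (is_series_plateau_weight _ tau Hx) as HW.
  pose proof (is_series_plateau_weight_mean _ tau Hx) as HQ.
  replace (1 - (1 - k2)) with k2 in HW, HQ by ring.
  assert (Hw : forall q, 0 <= w q) by (intro; apply pow_le; lra).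
  assert (Hf : forall q r, (q <= r)%nat -> f q <= f r).
  { intros q r Hqr; apply Rmult_le_compat_l;
      [apply Hpos | apply Rle_pow; [lra | now apply Nat.min_le_compat_r]]. }
  assert (Hfbound : forall q, Rabs (f q) <= pi 0%nat * (1 + k1) ^ tau).
  { intro q; rewrite Rabs_pos_eq by (apply Rmult_le_pos; [apply Hpos | apply pow_le; lra]).
    apply Rmult_le_compat_l; [apply Hpos | apply Rle_pow; [lra | apply Nat.le_min_r]]. }
  assert (Hpw : forall q, pi q = f q * w q) by exact Hform.
  destruct (ex_series_mul_bounded f (fun q => INR q * w q) _
              (fun q => Rmult_le_pos _ _ (pos_INR q) (Hw q)) Hfbound (ex_intro _ _ HQ))
    as [L HL].
  assert (Hmq : forall q, f q * (INR q * w q) = INR q * pi q) by (intro q; rewrite Hpw; ring).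
  assert (Hmw : forall q, f q * (INR q * w q) = INR q * (f q * w q)) by (intro q; ring).
  assert (Hmean : mean_queue pi = Finite L).
  { apply is_lim_seq_unique, (is_series_ext_R _ _ _ Hmq HL). }
  rewrite Hmean; cbn [Rbar_le].
  assert (HW0 : 0 < INR tau + / k2)
    by (pose proof (pos_INR tau); pose proof (Rinv_0_lt_compat k2 Hk2); lra).
  pose proof (mean_le_of_nondecreasing_ratio w f _ _ 1 L Hw Hf HW HQ
                (is_series_ext_R _ _ _ Hpw Hsum)
                (is_series_ext_R _ _ _ Hmw HL) HW0).
  apply (Rmult_le_reg_l (INR tau + / k2)); [exact HW0|].
  rewrite <- Rmult_assoc, Rinv_r, Rmult_1_l by lra; lra.
Qed.
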